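(* Let $\mathcal{A}^*$ be a graded-commutative differential graded algebra over a field $\mathbb{k}$ of characteristic zero, let $\mathcal{N}^*$ be a differential graded module over $\mathcal{A}^*$, and let $\xi_1,\xi_2\in\mathcal{A}^1$ be cocycles with $\xi_1-\xi_2=df$ for some $f\in\mathcal{A}^0$. Then the exact couples (and hence the spectral sequences) associated to $(\mathcal{N}^*,\xi_1)$ and to $(\mathcal{N}^*,\xi_2)$ by the construction described in the context are isomorphic. In other words, the deformation spectral sequence depends only on the cohomology class of $\xi$.
   Context: A differential graded module (DGM) $\mathcal{N}^*$ over $\mathcal{A}^*$ is a graded $\mathcal{A}^*$-module with a differential $d$ of degree $+1$ satisfying the Leibniz rule with respect to the pairing $\mathcal{A}^*\times\mathcal{N}^*\to\mathcal{N}^*$. For a cocycle $\xi\in\mathcal{A}^1$, let $\mathcal{N}^*[[t]]$ be the graded module of formal power series in $t$ with coefficients in $\mathcal{N}^*$ (degree-$k$ part: series with coefficients in $\mathcal{N}^k$), endowed with the differential $D_t x=dx+t\xi x$. The short exact sequence of DGMs $0\to\mathcal{N}^*[[t]]\xrightarrow{t}\mathcal{N}^*[[t]]\xrightarrow{\pi}\mathcal{N}^*\to 0$ (with $\pi$ setting $t=0$) induces a long exact sequence in cohomology, regarded as an exact couple $(D,E,i,j,k)$ with $D=H^*(\mathcal{N}^*[[t]],D_t)$, $E=H^*(\mathcal{N}^*,d)$, $i$ = multiplication by $t$, $j=\pi_*$, $k$ = the connecting homomorphism. Its spectral sequence is the one obtained by iterating Massey's derived couple construction ($E'=\mathrm{Ker}(jk)/\mathrm{Im}(jk)$,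 $D'=i(D)$, with induced maps). *)

(* Graded objects are modelled, as in Mathlib's GradedAlgebra,
   by an ambient k-vector space together with a family of homogeneous
   subspaces forming a direct-sum decomposition (nonnegative grading). *)
From HB Require Import structures.
From mathcomp Require Import all_boot all_order all_algebra.
From mathcomp Require Import boolp classical_sets functions.

Set Implicit Arguments.
Unset Strict Implicit.
Unset Printing Implicit Defensive.

Import GRing.Theory.
Local Open Scope ring_scope.

Section DeformationCouple.
Variable k : fieldType.

Definition sgn (n : nat) : k := (-1) ^+ n.

Definition is_subspace (V : lmodType k) (P : V -> Prop) : Prop :=
  [/\ P 0, (forall x y, P x -> P y -> P (x + y)) & (forall (c : k) x, P x -> P (c *: x))].

Definition graded_decomposition (V : lmodType k) (G : nat -> V -> Prop) : Prop :=
  [/\ (forall n, is_subspace (G n)),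
      (forall (m : nat) (v : nat -> V), (forall i, G i (v i)) ->
          \sum_(i < m) v i = 0 -> forall i, (i < m)%N -> v i = 0)
    & (forall x, exists (m : nat) (v : nat -> V),
          (forall i, G i (v i)) /\ x = \sum_(i < m) v i)].

Definition klinear (V W : lmodType k) (f : V -> W) : Prop :=
  forall (c : k) x y, f (c *: x + y) = c *: f x + f y.

Record is_cdga (A : algType k) (G : nat -> A -> Prop) (d : A -> A) : Prop := {
  cdga_graded : graded_decomposition G;
  cdga_one : G 0%N 1;
  cdga_mul : forall p q a b, G p a -> G q b -> G (p + q)%N (a * b);
  cdga_comm : forall p q a b, G p a -> G q b -> a * b = sgn (p * q) *: (b * a);
  cdga_dlin : klinear d;
  cdga_ddeg : forall p a, G p a -> G p.+1 (d a);
  cdga_dd : forall a, d (d a) = 0;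
  cdga_leibniz : forall p a b, G p a -> d (a * b) = d a * b + sgn p *: (a * d b)
}.

Record is_dgmod (A : algType k) (GA : nat -> A -> Prop) (dA : A -> A)
    (N : lmodType k) (GN : nat -> N -> Prop) (dN : N -> N) (act : A -> N -> N) : Prop := {
  dgm_graded : graded_decomposition GN;
  dgm_lin_l : forall x, klinear (fun a => act a x);
  dgm_lin_r : forall a, klinear (act a);
  dgm_one : forall x, act 1 x = x;
  dgm_assoc : forall a b x, act (a * b) x = act a (act b x);
  dgm_deg : forall p q a x, GA p a -> GN q x -> GN (p + q)%N (act a x);
  dgm_dlin : klinear dN;
  dgm_ddeg : forall q x, GN q x -> GN q.+1 (dN x);
  dgm_dd : forall x, dN (dN x) = 0;
  dgm_leibniz : forall p a x, GA p a ->
      dN (act a x) = act (dA a) x + sgn p *: act a (dN x)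
}.

(** ** Cohomology of a cochain complex (X, G, d), presented by representatives:
    H^n = {degree n cocycles} / {degree n coboundaries}. *)
Section Cohomology.
Variables (X : lmodType k) (G : nat -> X -> Prop) (d : X -> X).

Definition cocycle (n : nat) (x : X) : Prop := G n x /\ d x = 0.

Definition coboundary (n : nat) (x : X) : Prop :=
  match n with
  | 0%N => x = 0
  | m.+1 => exists y, G m y /\ x = d y
  end.

Definition cohomologous (n : nat) (x y : X) : Prop := coboundary n (x - y).
End Cohomology.

(** f (given on representatives, degreewise) induces a well-defined, degree
    preserving, k-linear map H^*(X) -> H^*(Y) *)
Definition cohom_map (X : lmodType k) (GX : nat -> X -> Prop) (dX : X -> X)
    (Y : lmodType k) (GY : nat -> Y -> Prop) (dY : Y -> Y) (f : nat -> X -> Y) : Prop :=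
  forall n,
  [/\ (forall x, cocycle GX dX n x -> cocycle GY dY n (f n x)),
      (forall x y, cocycle GX dX n x -> cocycle GX dX n y ->
          cohomologous GX dX n x y -> cohomologous GY dY n (f n x) (f n y))
    & (forall (c : k) x y, cocycle GX dX n x -> cocycle GX dX n y ->
          cohomologous GY dY n (f n (c *: x + y)) (c *: f n x + f n y))].

Definition cohom_iso (X : lmodType k) (GX : nat -> X -> Prop) (dX : X -> X)
    (Y : lmodType k) (GY : nat -> Y -> Prop) (dY : Y -> Y) (f : nat -> X -> Y) : Prop :=
  cohom_map GX dX GY dY f /\
  forall n,
  (forall x y, cocycle GX dX n x -> cocycle GX dX n y ->
      cohomologous GY dY n (f n x) (f n y) -> cohomologous GX dX n x y) /\
  (forall w, cocycle GY dY n w -> exists x, cocycle GX dX n x /\ cohomologous GY dY n (f n x) w).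

(** ** Formal power series N[[t]] = nat -> N (coefficient of t^m at m) *)
Section Series.
Variables (A : algType k) (N : lmodType k) (GN : nat -> N -> Prop)
  (dN : N -> N) (act : A -> N -> N).

(** degree-n part of N[[t]]: series with all coefficients in N^n *)
Definition ser_deg (n : nat) (s : nat -> N) : Prop := forall m, GN n (s m).

Definition tmul (s : nat -> N) : nat -> N :=
  fun m => if m is m'.+1 then s m' else 0.

Definition Dt (xi : A) (s : nat -> N) : nat -> N :=
  fun m => dN (s m) + tmul (fun j => act xi (s j)) m.

Definition piser (s : nat -> N) : N := s 0%N.

(** connecting homomorphism k : H^n(N) -> H^{n+1}(N[[t]]), as a relation on
    representatives: z (a cocycle) lifts to x with pi x = z, and D_t x = t w. *)
Definition connecting (xi : A) (n : nat) (z : N) (w : nat -> N) : Prop :=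
  exists x, [/\ ser_deg n x, piser x = z, ser_deg n.+1 w & Dt xi x = tmul w].

(** The exact couple (D, E, i, j, k) of (N, xi1) is isomorphic to that of
    (N, xi2): there are (degree preserving) isomorphisms
    alpha : D1 = H(N[[t]], D_t^{xi1}) -> D2 = H(N[[t]], D_t^{xi2}) and
    beta : E1 = H(N, d) -> E2 = H(N, d) with
    alpha o i1 = i2 o alpha, beta o j1 = j2 o alpha, alpha o k1 = k2 o beta. *)
Definition exact_couples_isomorphic (xi1 xi2 : A) : Prop :=
  exists (alpha : nat -> (nat -> N) -> (nat -> N)) (beta : nat -> N -> N),
  [/\ cohom_iso ser_deg (Dt xi1) ser_deg (Dt xi2) alpha,
      cohom_iso GN dN GN dN beta,
      (forall n s, cocycle ser_deg (Dt xi1) n s ->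
          cohomologous ser_deg (Dt xi2) n (alpha n (tmul s)) (tmul (alpha n s))),
      (forall n s, cocycle ser_deg (Dt xi1) n s ->
          cohomologous GN dN n (beta n (piser s)) (piser (alpha n s)))
    & (forall n z w, cocycle GN dN n z -> connecting xi1 n z w ->
          exists w', connecting xi2 n (beta n z) w' /\
                     cohomologous ser_deg (Dt xi2) n.+1 (alpha n.+1 w) w')].
End Series.

End DeformationCouple.

From HB Require Import structures.
From mathcomp Require Import all_boot all_order all_algebra.
From mathcomp Require Import boolp functions.
From mathcomp Require Import ring.

(* Multiplication by the series e^(t f) = sum_j f^j t^j / j! (which needs
   characteristic zero) is an automorphism of N[[t]] commuting with t and
   inducing the identity modulo t.  Since d(e^(t f)) = t df e^(t f) and
   df = xi1 - xi2, it intertwines D_t^(xi1) with D_t^(xi2), hence gives an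
   isomorphism of the long exact sequences, with the identity on E = H(N). *)

Import GRing.Theory.
Local Open Scope ring_scope.

Set Implicit Arguments.
Unset Strict Implicit.
Unset Printing Implicit Defensive.

Section KLinear.
Variables (k : fieldType) (V W : lmodType k) (g : V -> W).
Hypothesis g_lin : klinear g.

Lemma klinear0 : g 0 = 0.
Proof.
have := g_lin 1 0 0; rewrite scaler0 addr0 scale1r.
by move/(congr1 (fun z => z - g 0)); rewrite subrr addrK.
Qed.

Lemma klinearD x y : g (x + y) = g x + g y.
Proof. by have := g_lin 1 x y; rewrite !scale1r. Qed.

Lemma klinearZ c x : g (c *: x) = c *: g x.
Proof. by have := g_lin c x 0; rewrite !addr0 klinear0 addr0. Qed.

Lemma klinearN x : g (- x) = - g x.
Proof. by rewrite -scaleN1r klinearZ scaleN1r. Qed.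

Lemma klinearB x y : g (x - y) = g x - g y.
Proof. by rewrite klinearD klinearN. Qed.

Lemma klinear_sum m (F : 'I_m -> V) : g (\sum_(i < m) F i) = \sum_(i < m) g (F i).
Proof. exact: (big_morph g klinearD klinear0). Qed.

End KLinear.

Lemma subspace_sum (k : fieldType) (V : lmodType k) (P : V -> Prop) m (F : 'I_m -> V) :
  is_subspace P -> (forall i, P (F i)) -> P (\sum_(i < m) F i).
Proof. by case=> P0 PD _ PF; elim/big_ind: _ => //; auto. Qed.

Section CohomologyZero.
Variables (k : fieldType) (X : lmodType k) (G : nat -> X -> Prop) (d : X -> X).
Hypotheses (G0 : forall n, G n 0) (d0 : d 0 = 0).

Lemma coboundary0 n : coboundary G d n 0.
Proof. by case: n => [|n] //=; exists 0. Qed.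

Lemma cohomologous_refl n x : cohomologous G d n x x.
Proof. by rewrite /cohomologous subrr; apply: coboundary0. Qed.

End CohomologyZero.

Section ChainMap.
Variables (k : fieldType) (X Y : lmodType k).
Variables (GX : nat -> X -> Prop) (dX : X -> X) (GY : nat -> Y -> Prop) (dY : Y -> Y).
Variable g : X -> Y.
Hypotheses (g_lin : klinear g) (g_deg : forall n x, GX n x -> GY n (g x))
  (g_d : forall x, dY (g x) = g (dX x)).

Lemma cocycle_chain_map n x : cocycle GX dX n x -> cocycle GY dY n (g x).
Proof. by case=> Gx dx; split; [apply: g_deg | rewrite g_d dx klinear0]. Qed.

Lemma cohomologous_chain_map n x y :
  cohomologous GX dX n x y -> cohomologous GY dY n (g x) (g y).
Proof.
rewrite /cohomologous -(klinearB g_lin); case: n => [|n] /=; first by move=> ->; rewrite klinear0.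
by case=> z [Gz ->]; exists (g z); split; [apply: g_deg | rewrite g_d].
Qed.

End ChainMap.

Lemma cohom_iso_chain_iso (k : fieldType) (X Y : lmodType k)
    (GX : nat -> X -> Prop) (dX : X -> X) (GY : nat -> Y -> Prop) (dY : Y -> Y)
    (g : X -> Y) (h : Y -> X) :
  klinear g -> klinear h ->
  (forall n x, GX n x -> GY n (g x)) -> (forall n y, GY n y -> GX n (h y)) ->
  (forall x, dY (g x) = g (dX x)) -> (forall y, dX (h y) = h (dY y)) ->
  cancel g h -> cancel h g -> (forall n, GY n 0) -> dY 0 = 0 ->
  cohom_iso GX dX GY dY (fun _ => g).
Proof.
move=> g_lin h_lin g_deg h_deg g_d h_d gK hK GY0 dY0.
split=> n; split.
- exact: cocycle_chain_map.
- by move=> x y _ _; apply: cohomologous_chain_map.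
- by move=> c x y _ _; rewrite g_lin; apply: cohomologous_refl.
- move=> x y _ _ /(cohomologous_chain_map h_lin h_deg h_d).
  by rewrite !gK.
- move=> w Hw; exists (h w); split; first exact: (cocycle_chain_map h_lin h_deg h_d Hw).
  by rewrite hK; apply: cohomologous_refl.
Qed.

Lemma cohom_iso_id (k : fieldType) (X : lmodType k) (G : nat -> X -> Prop) (d : X -> X) :
  (forall n, G n 0) -> d 0 = 0 -> cohom_iso G d G d (fun _ x => x).
Proof. by move=> G0 d0; apply: (cohom_iso_chain_iso (h := id)). Qed.

Section DeformationSeries.
Variable k : fieldType.
Hypothesis char0 : [pchar k] =i pred0.
Variables (A : algType k) (GA : nat -> A -> Prop) (dA : A -> A).
Hypothesis HA : is_cdga GA dA.
Variables (N : lmodType k) (GN : nat -> N -> Prop) (dN : N -> N) (act : A -> N -> N).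
Hypothesis HN : is_dgmod GA dA GN dN act.

Lemma sgn0 : sgn k 0 = 1.
Proof. exact: expr0. Qed.

Lemma natr_fact_neq0 j : (j`!%:R : k) != 0.
Proof. by move/pcharf0P: char0 => ->; rewrite -lt0n fact_gt0. Qed.

Lemma act0l x : act 0 x = 0.
Proof. exact: (klinear0 (dgm_lin_l HN x)). Qed.

Lemma act_addl a b x : act (a + b) x = act a x + act b x.
Proof. exact: (klinearD (dgm_lin_l HN x)). Qed.

Lemma act_suml m (F : 'I_m -> A) x : act (\sum_(i < m) F i) x = \sum_(i < m) act (F i) x.
Proof. exact: (klinear_sum (dgm_lin_l HN x)). Qed.

Lemma act0r a : act a 0 = 0.
Proof. exact: (klinear0 (dgm_lin_r HN a)). Qed.

Lemma act_addr a x y : act a (x + y) = act a x + act a y.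
Proof. exact: (klinearD (dgm_lin_r HN a)). Qed.

Lemma act_scaler a c x : act a (c *: x) = c *: act a x.
Proof. exact: (klinearZ (dgm_lin_r HN a)). Qed.

Lemma act_sumr a m (F : 'I_m -> N) : act a (\sum_(i < m) F i) = \sum_(i < m) act a (F i).
Proof. exact: (klinear_sum (dgm_lin_r HN a)). Qed.

Lemma GA_scale n c a : GA n a -> GA n (c *: a).
Proof. by case: (cdga_graded HA) => GAsub _ _; case: (GAsub n) => _ _; apply. Qed.

Lemma GA0_exp a n : GA 0 a -> GA 0 (a ^+ n).
Proof.
move=> Ga; elim: n => [|n IH]; first by rewrite expr0; apply: (cdga_one HA).
by rewrite exprS; apply: (cdga_mul HA Ga IH).
Qed.

Lemma GN0 n : GN n 0.
Proof. by case: (dgm_graded HN) => GNsub _ _; case: (GNsub n). Qed.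

Lemma ser_deg0 n : ser_deg GN n 0.
Proof. by move=> m; apply: GN0. Qed.

Lemma Dt0 xi : Dt dN act xi 0 = 0.
Proof.
apply: funext => -[|m]; rewrite /Dt /= (klinear0 (dgm_dlin HN)) add0r //.
exact: act0r.
Qed.

Lemma deg0_central p a b : GA 0 a -> GA p b -> a * b = b * a.
Proof. by move=> Ga Gb; rewrite (cdga_comm HA Ga Gb) mul0n sgn0 scale1r. Qed.

Lemma dA1 : dA 1 = 0.
Proof.
have := cdga_leibniz HA 1 (cdga_one HA); rewrite !mul1r mulr1 sgn0 scale1r.
by move/(congr1 (fun z => z - dA 1)); rewrite subrr addrK => /esym.
Qed.

Lemma dA_exp f n : GA 0 f -> dA (f ^+ n.+1) = n.+1%:R *: (dA f * f ^+ n).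
Proof.
move=> Gf; elim: n => [|n IH]; first by rewrite expr1 expr0 mulr1 scale1r.
rewrite exprS (cdga_leibniz HA _ Gf) sgn0 scale1r IH -scalerAr mulrA.
rewrite (deg0_central Gf (cdga_ddeg HA Gf)) -mulrA -exprS.
by rewrite -[n.+2%:R]natr1 scalerDl scale1r addrC.
Qed.

Definition expser (g : A) : nat -> A := fun j => (j`!%:R : k)^-1 *: g ^+ j.

Definition ser_mul (a b : nat -> A) : nat -> A :=
  fun p => \sum_(i < p.+1) a i * b (p - i)%N.

Definition ser_act (a : nat -> A) (s : nat -> N) : nat -> N :=
  fun m => \sum_(i < m.+1) act (a i) (s (m - i)%N).

Lemma expser0 g : expser g 0 = 1.
Proof. by rewrite /expser expr0 fact0 invr1 scale1r. Qed.

Lemma expser_zero p : expser 0 p = (p == 0)%:R.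
Proof. by case: p => [|p]; rewrite ?expser0 // /expser expr0n scaler0. Qed.

Lemma GA0_expser g j : GA 0 g -> GA 0 (expser g j).
Proof. by move=> Gg; apply/GA_scale/GA0_exp. Qed.

Lemma dA_expser f : GA 0 f -> (fun j => dA (expser f j)) = tmul (fun j => dA f * expser f j).
Proof.
move=> Gf; apply: funext => -[|j] /=; first by rewrite expser0 dA1.
rewrite /expser (klinearZ (cdga_dlin HA)) dA_exp // scalerA -scalerAr.
congr (_ *: _); rewrite factS natrM.
have jS_neq0 : (j.+1%:R : k) != 0 by move/pcharf0P: char0 => ->.
by field; rewrite natr_fact_neq0 nat1r jS_neq0.
Qed.

(* Coefficientwise, this is the binomial theorem. *)
Lemma expser_mul g h : GRing.comm g h -> ser_mul (expser g) (expser h) = expser (g + h).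
Proof.
move=> gh; apply: funext => p; rewrite /ser_mul /expser addrC (exprDn_comm _ (esym gh)).
rewrite scaler_sumr; apply: eq_bigr => -[i /= ip] _.
rewrite -scalerAl -scalerAr scalerA -scaler_nat scalerA.
rewrite (commrX _ (commr_sym (commrX _ gh))); congr (_ *: _).
rewrite -(bin_fact (ip : (i <= p)%N)) !natrM.
have bin_neq0 : ('C(p, i)%:R : k) != 0.
  by move/pcharf0P: char0 => ->; rewrite -lt0n bin_gt0.
by field; rewrite !natr_fact_neq0 bin_neq0.
Qed.

Lemma ser_act0 a s : ser_act a s 0 = act (a 0%N) (s 0%N).
Proof. exact: big_ord1. Qed.

Lemma ser_actS a s m :
  ser_act a s m.+1 = ser_act a (fun j => s j.+1) m + act (a m.+1) (s 0%N).
Proof.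
rewrite /ser_act big_ord_recr /= subnn; congr (_ + _); apply: eq_bigr => i _.
by rewrite subSn // -ltnS.
Qed.

Lemma ser_actD a s s' : ser_act a (s + s') = ser_act a s + ser_act a s'.
Proof.
apply: funext => m; transitivity (ser_act a s m + ser_act a s' m); last by [].
by rewrite /ser_act -big_split; apply: eq_bigr => i _; rewrite act_addr.
Qed.

Lemma ser_act_linear a : klinear (ser_act a).
Proof.
move=> c s s'; rewrite ser_actD; congr (_ + _); apply: funext => m.
transitivity (c *: ser_act a s m); last by [].
by rewrite /ser_act scaler_sumr; apply: eq_bigr => i _; rewrite -act_scaler.
Qed.

Lemma ser_act_mul a b s : ser_act a (ser_act b s) = ser_act (ser_mul a b) s.
Proof.
apply: funext => m; elim: m s => [|m IH] s.
  by rewrite !ser_act0 /ser_mul big_ord1 (dgm_assoc HN).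
have shift_act : (fun j => ser_act b s j.+1)
    = ser_act b (fun j => s j.+1) + (fun j => act (b j.+1) (s 0%N)).
  by apply: funext => j; rewrite ser_actS.
rewrite ser_actS shift_act ser_actD.
rewrite -[(_ + _) m]/(_ m + _ m) IH ser_actS ser_act0 -addrA; congr (_ + _).
rewrite /ser_mul big_ord_recr /= subnn act_addl act_suml (dgm_assoc HN); congr (_ + _).
by apply: eq_bigr => i _; rewrite -(dgm_assoc HN) subSn // -ltnS.
Qed.

Lemma ser_act1 s : ser_act (fun p => (p == 0)%:R) s = s.
Proof.
apply: funext => m; rewrite /ser_act big_ord_recl /= (dgm_one HN) subn0 big1 ?addr0 //.
by move=> i _; rewrite act0l.
Qed.

Lemma ser_act_expserK f : cancel (ser_act (expser f)) (ser_act (expser (- f))).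
Proof.
move=> s; rewrite ser_act_mul expser_mul; last exact/commr_sym/commrN/commr_refl.
by rewrite addNr (funext expser_zero) ser_act1.
Qed.

Lemma ser_act_expserNK f : cancel (ser_act (expser (- f))) (ser_act (expser f)).
Proof. by move=> s; rewrite -{1}(opprK f) ser_act_expserK. Qed.

Lemma ser_act_tmulr a s : ser_act a (tmul s) = tmul (ser_act a s).
Proof.
apply: funext => -[|m]; first by rewrite ser_act0 act0r.
by rewrite ser_actS act0r addr0.
Qed.

Lemma ser_act_tmull b s : ser_act (tmul b) s = tmul (ser_act b s).
Proof.
apply: funext => -[|m]; first by rewrite ser_act0 act0l.
rewrite /ser_act big_ord_recl /= act0l add0r; apply: eq_bigr => i _.
by rewrite /bump /= add1n subSS.
Qed.

Lemma ser_act_mull c a s : ser_act (fun j => c * a j) s = (fun m => act c (ser_act a s m)).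
Proof.
by apply: funext => m; rewrite act_sumr; apply: eq_bigr => i _; rewrite (dgm_assoc HN).
Qed.

Lemma ser_act_central c a s : (forall i, a i * c = c * a i) ->
  ser_act a (fun j => act c (s j)) = (fun m => act c (ser_act a s m)).
Proof.
move=> ac; apply: funext => m; rewrite act_sumr; apply: eq_bigr => i _.
by rewrite -!(dgm_assoc HN) ac.
Qed.

Lemma ser_deg_ser_act a n s :
  (forall i, GA 0 (a i)) -> ser_deg GN n s -> ser_deg GN n (ser_act a s).
Proof.
move=> Ga Gs m; apply: subspace_sum => [|i]; first by case: (dgm_graded HN).
exact: (dgm_deg HN (Ga i) (Gs _)).
Qed.

Lemma dN_ser_act a s : (forall i, GA 0 (a i)) ->
  (fun m => dN (ser_act a s m))
    = ser_act (fun j => dA (a j)) s + ser_act a (fun j => dN (s j)).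
Proof.
move=> Ga; apply: funext => m; rewrite -[(_ + _) m]/(_ m + _ m).
rewrite /ser_act (klinear_sum (dgm_dlin HN)) -big_split.
by apply: eq_bigr => i _; rewrite (dgm_leibniz HN _ (Ga i)) sgn0 scale1r.
Qed.

Lemma Dt_ser_act_expser xi1 xi2 f s : GA 1 xi1 -> GA 0 f -> xi1 - xi2 = dA f ->
  Dt dN act xi2 (ser_act (expser f) s) = ser_act (expser f) (Dt dN act xi1 s).
Proof.
move=> Hxi1 Hf Hdf; have Gexp i := GA0_expser i Hf.
have xi1E : xi1 = dA f + xi2 by rewrite -Hdf subrK.
have Dt_split xi (u : nat -> N) :
    Dt dN act xi u = (fun j => dN (u j)) + tmul (fun j => act xi (u j)) by [].
rewrite !Dt_split dN_ser_act // (dA_expser Hf) ser_act_tmull ser_act_mull.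
rewrite ser_actD ser_act_tmulr ser_act_central; last first.
  by move=> i; apply: (deg0_central (Gexp i) Hxi1).
rewrite (addrC (tmul _)) -addrA; congr (_ + _); apply: funext => -[|m].
  by rewrite -[(_ + _) _]/(_ _ + _ _) /= addr0.
by rewrite -[(_ + _) _]/(_ _ + _ _) /= xi1E act_addl addrC.
Qed.

Lemma piser_ser_act_expser f s : piser (ser_act (expser f) s) = piser s.
Proof. by rewrite /piser ser_act0 expser0 (dgm_one HN). Qed.

Lemma cohom_iso_ser_act_expser xi1 xi2 f :
  GA 1 xi1 -> GA 1 xi2 -> GA 0 f -> xi1 - xi2 = dA f ->
  cohom_iso (ser_deg GN) (Dt dN act xi1) (ser_deg GN) (Dt dN act xi2)
    (fun _ => ser_act (expser f)).
Proof.
move=> Hxi1 Hxi2 Hf Hdf.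
have GNf : GA 0 (- f) by rewrite -scaleN1r; apply: GA_scale.
have HdNf : xi2 - xi1 = dA (- f) by rewrite (klinearN (cdga_dlin HA)) -Hdf opprB.
apply: (cohom_iso_chain_iso (h := ser_act (expser (- f)))).
- exact: ser_act_linear.
- exact: ser_act_linear.
- by move=> n s; apply: ser_deg_ser_act => i; apply: GA0_expser.
- by move=> n s; apply: ser_deg_ser_act => i; apply: GA0_expser.
- by move=> s; rewrite (Dt_ser_act_expser _ Hxi1 Hf Hdf).
- by move=> s; rewrite (Dt_ser_act_expser _ Hxi2 GNf HdNf).
- exact: ser_act_expserK.
- exact: ser_act_expserNK.
- exact: ser_deg0.
- exact: Dt0.
Qed.

Lemma connecting_ser_act_expser xi1 xi2 f n z w :
  GA 1 xi1 -> GA 0 f -> xi1 - xi2 = dA f -> connecting GN dN act xi1 n z w ->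
  connecting GN dN act xi2 n z (ser_act (expser f) w).
Proof.
move=> Hxi1 Hf Hdf [x [Gx xz Gw Dx]]; have Gexp i := GA0_expser i Hf.
exists (ser_act (expser f) x); split.
- exact: ser_deg_ser_act.
- by rewrite piser_ser_act_expser.
- exact: ser_deg_ser_act.
- by rewrite (Dt_ser_act_expser _ Hxi1 Hf Hdf) Dx ser_act_tmulr.
Qed.

End DeformationSeries.

Theorem proposition3p1 (k : fieldType) (Hchar : [pchar k] =i pred0)
  (A : algType k) (GA : nat -> A -> Prop) (dA : A -> A) (HA : is_cdga GA dA)
  (N : lmodType k) (GN : nat -> N -> Prop) (dN : N -> N) (act : A -> N -> N)
  (HN : is_dgmod GA dA GN dN act)
  (xi1 xi2 f : A)
  (Hxi1 : GA 1%N xi1) (Hdxi1 : dA xi1 = 0)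
  (Hxi2 : GA 1%N xi2) (Hdxi2 : dA xi2 = 0)
  (Hf : GA 0%N f) (Hdf : xi1 - xi2 = dA f) :
  exact_couples_isomorphic GN dN act xi1 xi2.
Proof.
have dN0 : dN 0 = 0 := klinear0 (dgm_dlin HN).
exists (fun _ => ser_act act (expser f)), (fun _ x => x); split.
- exact: (cohom_iso_ser_act_expser Hchar HA HN Hxi1 Hxi2 Hf Hdf).
- exact: (cohom_iso_id (GN0 HN) dN0).
- move=> n s _; rewrite (ser_act_tmulr HN).
  exact: (cohomologous_refl (ser_deg0 HN) (Dt0 HN xi2)).
- move=> n s _; rewrite (piser_ser_act_expser HN).
  exact: (cohomologous_refl (GN0 HN) dN0).
- move=> n z w _ /(connecting_ser_act_expser Hchar HA HN Hxi1 Hf Hdf) Hw.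
  by exists (ser_act act (expser f) w); split=> //; apply: (cohomologous_refl (ser_deg0 HN) (Dt0 HN xi2)).
Qed.
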